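(* For all integers $m\ge1$ and $v\ge1$, the untwisted Dowker sum satisfies $$S_{m,v,1}:=\sum_{k=1}^{m-1}\csc^{2v}\!\left(\frac{k\pi}{m}\right)=2^{2v+1}\sum_{n=0}^{v-1}\left(\frac{m}{2\pi}\right)^{2v-2n}\frac{\Gamma(2v-2n)}{\Gamma(2v)}\,s(v,n)\left(1-\frac{1}{m^{2v-2n}}\right)\zeta(2v-2n).$$ In particular $S_{m,v,1}$ is a polynomial in $m^2$ of degree $v$ divisible by $m^2-1$.
   Context: For integers $v\ge1$ and $0\le n\le v-1$, $s(v,n)$ denotes the $n$-th elementary symmetric polynomial evaluated at $1^2,2^2,\dots,(v-1)^2$, with $s(v,0)=1$. $\zeta$ is the Riemann zeta function. Empty sums equal $0$. *)

From Stdlib Require Import Reals List ClassicalEpsilon Factorial.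
Import ListNotations.
Open Scope R_scope.

Fixpoint sumR (n : nat) (f : nat -> R) : R :=
  match n with
  | O => 0
  | S n' => sumR n' f + f n'
  end.

Fixpoint esym (l : list R) (n : nat) : R :=
  match l, n with
  | _, O => 1
  | nil, S _ => 0
  | x :: l', S n' => esym l' (S n') + x * esym l' n'
  end.

Definition s (v n : nat) : R :=
  esym (map (fun i => (INR (i + 1)) ^ 2) (seq 0 (v - 1))) n.

(* Riemann zeta at an integer s (meaningful for s >= 2): the limit of the
   partial sums of sum_{k>=1} 1/k^s, chosen by (classical) epsilon. *)
Definition zeta (s : nat) : R :=
  epsilon (inhabits 0)
    (fun l => Un_cv (fun N => sum_f_R0 (fun k => / (INR (k + 1)) ^ s) N) l).

Definition GammaNat (k : nat) : R := INR (Factorial.fact (k - 1)).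

Definition csc (x : R) : R := / sin x.

Definition Dowker (m v : nat) : R :=
  sumR (m - 1) (fun j => (csc (INR (j + 1) * PI / INR m)) ^ (2 * v)).

From Stdlib Require Import Reals List Lra Lia Psatz ClassicalEpsilon Factorial.
From Coquelicot Require Import Coquelicot.
Import ListNotations.
Open Scope R_scope.

(* Euler's expansion π²/sin²(πx) = Σ_{n ∈ ℤ} (x + n)^(-2) holds because the
   difference h of the two sides is bounded on (0, 1) and satisfies
   h(x) = (h(x/2) + h((x+1)/2)) / 4, so that |h| <= C / 2^k for every k.
   Put Z_p(x) = Σ_{n ∈ ℤ} (x + n)^(-p), Q = π² csc²(πx) and K = π cot(πx).
   Then Z_p' = -p Z_(p+1), Q' = -2 Q K, K' = -Q and K² = Q - π², so
   differentiating Q^v = Σ_n c(v,n) π^(2n) Z_(2v-2n) twice gives the same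
   identity for v + 1, as c(v,n) = 4^n Γ(2v-2n)/Γ(2v) s(v,n) satisfies the
   recursion inherited from s(v+1,n+1) = s(v,n+1) + v² s(v,n).
   Finally Σ_{k=1}^{m-1} Z_(2j)(k/m) = m^(2j) Σ_{m ∤ N} N^(-2j)
   = 2 (m^(2j) - 1) ζ(2j), and m² - 1 divides each m^(2j) - 1. *)

(** * Finite sums and series *)

Lemma sumR_S n f : sumR (S n) f = sumR n f + f n.
Proof. reflexivity. Qed.

Lemma sumR_ext n f g : (forall k, (k < n)%nat -> f k = g k) -> sumR n f = sumR n g.
Proof.
  induction n as [|n IHn]; intros Hfg; simpl; [reflexivity|].
  rewrite IHn, Hfg; [reflexivity|lia|intros; apply Hfg; lia].
Qed.

Lemma sumR_plus n f g : sumR n (fun k => f k + g k) = sumR n f + sumR n g.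
Proof. induction n as [|n IHn]; simpl; [ring|rewrite IHn; ring]. Qed.

Lemma sumR_scal_l c n f : sumR n (fun k => c * f k) = c * sumR n f.
Proof. induction n as [|n IHn]; simpl; [ring|rewrite IHn; ring]. Qed.

Lemma sumR_Sl n f : sumR (S n) f = f 0%nat + sumR n (fun k => f (S k)).
Proof. induction n as [|n IHn]; [simpl; ring|rewrite sumR_S, IHn; simpl; ring]. Qed.

Lemma sumR_add n m a : sumR (n + m) a = sumR n a + sumR m (fun k => a (n + k)%nat).
Proof.
  induction m as [|m IHm]; [rewrite Nat.add_0_r; simpl; ring|].
  rewrite Nat.add_succ_r, !sumR_S, IHm. ring.
Qed.

Lemma sumR_blocks L m a :
  sumR L (fun l => sumR m (fun k => a (l * m + k)%nat)) = sumR (L * m) a.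
Proof.
  induction L as [|L IHL]; [reflexivity|].
  rewrite sumR_S, IHL, <- sumR_add. f_equal. lia.
Qed.

Lemma sumR_rev n f : sumR n (fun k => f (n - 1 - k)%nat) = sumR n f.
Proof.
  induction n as [|n IHn]; [reflexivity|].
  rewrite sumR_Sl, sumR_S, <- IHn. replace (S n - 1 - 0)%nat with n by lia.
  rewrite (sumR_ext n _ (fun k => f (n - 1 - k)%nat)) by (intros; f_equal; lia). ring.
Qed.

Lemma sumR_swap m n (f : nat -> nat -> R) :
  sumR m (fun j => sumR n (f j)) = sumR n (fun k => sumR m (fun j => f j k)).
Proof.
  induction m as [|m IHm]; simpl.
  - induction n as [|n IHn]; simpl; [reflexivity|rewrite <- IHn; ring].
  - rewrite IHm, <- sumR_plus. reflexivity.
Qed.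

Lemma sumR_triangle v (c w : nat -> R) :
  sumR v (fun n => c n * sumR (v - n) w) = sumR v (fun j => sumR (v - j) c * w j).
Proof.
  induction v as [|v IHv]; [reflexivity|].
  rewrite (sumR_ext (S v) _ (fun n => c n * sumR (v - n) w + c n * w (v - n)%nat))
    by (intros n Hn; replace (S v - n)%nat with (S (v - n)) by lia; simpl; ring).
  rewrite (sumR_ext (S v) (fun j => sumR (S v - j) c * w j)
    (fun j => sumR (v - j) c * w j + c (v - j)%nat * w j))
    by (intros n Hn; replace (S v - n)%nat with (S (v - n)) by lia; simpl; ring).
  rewrite !sumR_plus, <- (sumR_rev (S v) (fun j => c (v - j)%nat * w j)).
  rewrite (sumR_S v (fun n => c n * _)), (sumR_S v (fun j => sumR (v - j) c * _)), IHv.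
  replace (v - v)%nat with 0%nat by lia. simpl sumR.
  rewrite (sumR_ext v (fun k => c (v - (v - 0 - k))%nat * w (v - 0 - k)%nat)
    (fun k => c k * w (v - k)%nat)) by (intros k Hk; f_equal; f_equal; lia).
  replace (v - (v - 0 - v))%nat with v by lia.
  replace (v - 0 - v)%nat with (v - v)%nat by lia. ring.
Qed.

Lemma sumR_geom x n : x ^ n - 1 = (x - 1) * sumR n (pow x).
Proof. induction n as [|n IHn]; simpl; [ring|]. rewrite Rmult_plus_distr_l, <- IHn. ring. Qed.

Lemma sum_n_sumR a N : sum_n a N = sumR (S N) a.
Proof.
  induction N as [|N IHN]; [rewrite sum_O; simpl; now rewrite Rplus_0_l|].
  rewrite sum_Sn, IHN. reflexivity.
Qed.

Lemma is_series_telescope (u : nat -> R) :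
  is_lim_seq u 0 -> is_series (fun k => u k - u (S k)) (u 0%nat).
Proof.
  intros Hu. unfold is_series.
  change (is_lim_seq (sum_n (fun k => u k - u (S k))) (u 0%nat)).
  apply (is_lim_seq_ext (fun N => u 0%nat - u (S N))).
  - intros N. induction N as [|N IHN]; [now rewrite sum_O|].
    rewrite sum_Sn, <- IHN. unfold plus; simpl. ring.
  - pose proof (is_lim_seq_minus' _ _ _ _ (is_lim_seq_const (u 0%nat))
      (proj1 (is_lim_seq_incr_1 u 0) Hu)) as Hlim.
    now rewrite Rminus_0_r in Hlim.
Qed.

Lemma is_lim_seq_div_INR (c : R) (n : nat) : is_lim_seq (fun k => c / INR (S n + k)) 0.
Proof.
  replace (Finite 0) with (Rbar_mult c 0) by (simpl; f_equal; ring).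
  apply (is_lim_seq_scal_l (fun k => / INR (S n + k)) c 0).
  replace (Finite 0) with (Rbar_inv p_infty) by reflexivity.
  apply is_lim_seq_inv; [|discriminate].
  apply (is_lim_seq_le_p_loc INR).
  - exists 0%nat. intros k _. apply le_INR. lia.
  - apply is_lim_seq_INR.
Qed.

Lemma eventually_div_INR_lt (c eps : R) :
  0 < eps -> exists N, forall n, (N <= n)%nat -> c / INR (S n) < eps.
Proof.
  intros Heps.
  destruct (proj2 (is_lim_seq_spec _ 0) (is_lim_seq_div_INR c 0) (mkposreal _ Heps))
    as [N HN].
  exists N. intros n Hn. specialize (HN n Hn). change (S 0 + n)%nat with (S n) in HN.
  rewrite Rminus_0_r in HN. exact (Rle_lt_trans _ _ _ (Rle_abs _) HN).
Qed.

Lemma ex_series_telescope_bound (a : nat -> R) (C : R) :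
  (forall l, (1 <= l)%nat -> Rabs (a l) <= C * (/ INR l - / INR (S l))) ->
  ex_series a /\ forall n, Rabs (Series a - sum_n a n) <= C / INR (S n).
Proof.
  intros Hb.
  assert (Htail : forall n, ex_series (fun k => a (S n + k)%nat) /\
     Rabs (Series (fun k => a (S n + k)%nat)) <= C / INR (S n)).
  { intros n. set (u := fun k => C / INR (S n + k)).
    assert (Hu : is_series (fun k => u k - u (S k)) (u 0%nat))
      by apply is_series_telescope, is_lim_seq_div_INR.
    assert (Hle : forall k, Rabs (a (S n + k)%nat) <= u k - u (S k)).
    { intros k. unfold u. replace (S n + S k)%nat with (S (S n + k)) by lia.
      unfold Rdiv. rewrite <- Rmult_minus_distr_l. apply Hb. lia. }
    assert (Habs : ex_series (fun k => Rabs (a (S n + k)%nat))).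
    { apply (@ex_series_le R_AbsRing R_CompleteNormedModule _ (fun k => u k - u (S k))).
      - intros k. unfold norm; simpl. unfold abs; simpl. rewrite Rabs_Rabsolu. apply Hle.
      - eexists; exact Hu. }
    split; [now apply ex_series_Rabs|].
    eapply Rle_trans; [apply Series_Rabs, Habs|].
    eapply Rle_trans; [apply Series_le; [|eexists; exact Hu]|].
    - intros k. split; [apply Rabs_pos|apply Hle].
    - rewrite (is_series_unique _ _ Hu). unfold u. rewrite Nat.add_0_r. lra. }
  assert (Hex : ex_series a) by (apply ex_series_incr_1, (Htail 0%nat)).
  split; [exact Hex|]. intros n.
  rewrite (Series_incr_n a (S n)), sum_n_Reals by (lia || exact Hex). simpl pred.
  replace (sum_f_R0 a n + Series (fun k => a (S n + k)%nat) - sum_f_R0 a n)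
    with (Series (fun k => a (S n + k)%nat)) by ring.
  apply Htail.
Qed.

Lemma is_series_blocks a m l : (1 <= m)%nat -> is_series a l ->
  is_series (fun j => sumR m (fun k => a (j * m + k)%nat)) l.
Proof.
  intros Hm Ha. unfold is_series.
  change (is_lim_seq (sum_n (fun j => sumR m (fun k => a (j * m + k)%nat))) l).
  apply (is_lim_seq_ext (fun L => sum_n a (S L * m - 1))).
  { intros L. rewrite !sum_n_sumR, sumR_blocks. f_equal. destruct m; [lia|simpl; lia]. }
  apply (is_lim_seq_subseq (sum_n a) l (fun L => S L * m - 1)%nat); [|exact Ha].
  intros P [N HN]. exists N. intros n Hn. apply HN. destruct m; [lia|simpl; lia].
Qed.

Lemma is_series_sumR n (a : nat -> nat -> R) (la : nat -> R) :
  (forall k, (k < n)%nat -> is_series (a k) (la k)) ->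
  is_series (fun l => sumR n (fun k => a k l)) (sumR n la).
Proof.
  induction n as [|n IHn]; intros Ha; simpl.
  - apply (is_series_ext (fun k => (fun _ : nat => 0) k - (fun _ : nat => 0) (S k)));
      [intros; simpl; ring|].
    exact (is_series_telescope (fun _ => 0) (is_lim_seq_const 0)).
  - apply (is_series_plus (V := R_NormedModule)); [apply IHn|apply Ha]; intros; try apply Ha; lia.
Qed.

Lemma inv_pow_le_telescope (y : R) l p : (1 <= l)%nat -> (2 <= p)%nat -> INR l <= y ->
  0 < / y ^ p <= 2 * (/ INR l - / INR (S l)).
Proof.
  intros Hl Hp Hy. assert (HL : 1 <= INR l) by apply (le_INR 1), Hl.
  split; [apply Rinv_0_lt_compat, pow_lt; lra|].
  apply Rle_trans with (/ (INR l * INR l)).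
  - apply Rinv_le_contravar; [nra|].
    apply Rle_trans with (y ^ 2); [simpl; nra|apply Rle_pow; [lra|exact Hp]].
  - rewrite S_INR.
    assert (E : 2 * (/ INR l - / (INR l + 1)) - / (INR l * INR l)
      = (INR l - 1) / (INR l * INR l * (INR l + 1))) by (field; lra).
    assert (0 <= (INR l - 1) / (INR l * INR l * (INR l + 1)))
      by (apply Rdiv_le_0_compat; [lra|apply Rmult_lt_0_compat; nra]).
    lra.
Qed.

(** * The lattice sums [Σ_{n ∈ ℤ} (x + n)^(-p)] *)

(* [ZF p x] is [Σ_{n ∈ ℤ} (x + n)^(-p)] for [0 < x < 1]; the terms [n = l] and
   [n = -(l + 1)] are paired in [ZT p x l]. *)
Definition ZT (p : nat) (x : R) (l : nat) : R :=
  / (INR l + x) ^ p + (-1) ^ p * / (INR l + 1 - x) ^ p.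

Definition ZF (p : nat) (x : R) : R := Series (ZT p x).

Lemma ZT_deriv p x l : 0 < x < 1 -> is_derive (fun y => ZT p y l) x (- INR p * ZT (S p) x l).
Proof.
  intros Hx. pose proof (pos_INR l) as Hl.
  assert (Ha : INR l + x <> 0) by lra.
  assert (Hb : INR l + 1 + - x <> 0) by lra.
  unfold ZT. auto_derive.
  - repeat split; auto using pow_nonzero.
  - replace (INR l + 1 - x) with (INR l + 1 + - x) by ring.
    destruct p as [|q]; [simpl; ring|].
    assert ((INR l + x) ^ q <> 0) by auto using pow_nonzero.
    assert ((INR l + 1 + - x) ^ q <> 0) by auto using pow_nonzero.
    simpl. field. auto.
Qed.

Lemma ZT_bound p x l : (2 <= p)%nat -> 0 < x < 1 -> (1 <= l)%nat ->
  Rabs (ZT p x l) <= 4 * (/ INR l - / INR (S l)).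
Proof.
  intros Hp Hx Hl. unfold ZT.
  destruct (inv_pow_le_telescope (INR l + x) l p Hl Hp) as [A1 A2]; [lra|].
  destruct (inv_pow_le_telescope (INR l + 1 - x) l p Hl Hp) as [B1 B2]; [lra|].
  eapply Rle_trans; [apply Rabs_triang|]. rewrite Rabs_mult, pow_1_abs.
  rewrite !Rabs_right by lra. lra.
Qed.

Lemma ZT_series p x : (2 <= p)%nat -> 0 < x < 1 -> ex_series (ZT p x) /\
  forall n, Rabs (ZF p x - sum_n (ZT p x) n) <= 4 / INR (S n).
Proof. intros Hp Hx. apply ex_series_telescope_bound. intros l Hl. now apply ZT_bound. Qed.

Lemma is_derive_sumR (f f' : nat -> R -> R) n x :
  (forall k, (k < n)%nat -> is_derive (f k) x (f' k x)) ->
  is_derive (fun y => sumR n (fun k => f k y)) x (sumR n (fun k => f' k x)).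
Proof.
  induction n as [|n IHn]; intros Hf; simpl; apply is_derive_Reals.
  - apply derivable_pt_lim_const.
  - apply (derivable_pt_lim_plus (fun y => sumR n (fun k => f k y)) (f n));
      apply is_derive_Reals; [apply IHn; intros k Hk|]; apply Hf; lia.
Qed.

Lemma boule_half y : Boule (1/2) (mkposreal (1/2) ltac:(lra)) y <-> 0 < y < 1.
Proof.
  unfold Boule; simpl. split; intros H; [apply Rabs_def2 in H; lra|apply Rabs_def1; lra].
Qed.

(* Termwise differentiation, justified by the uniform tail bound of [ZT_series]. *)
Lemma ZF_deriv p x : (2 <= p)%nat -> 0 < x < 1 -> is_derive (ZF p) x (- INR p * ZF (S p) x).
Proof.
  intros Hp Hx. apply is_derive_Reals.
  apply (CVU_derivable (fun N y => sum_n (ZT p y) N)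
     (fun N y => sum_n (fun l => - INR p * ZT (S p) y l) N)
     (ZF p) (fun y => - INR p * ZF (S p) y) (1/2) (mkposreal (1/2) ltac:(lra)));
    [| |intros n y Hy; apply boule_half in Hy| now apply boule_half].
  - intros eps Heps.
    assert (HP : 0 < INR p) by (apply lt_0_INR; lia).
    destruct (eventually_div_INR_lt (4 * INR p) eps Heps) as [N HN].
    exists N. intros n y Hn Hy. apply boule_half in Hy.
    destruct (ZT_series (S p) y ltac:(lia) Hy) as [_ Ht].
    rewrite !sum_n_sumR, sumR_scal_l, <- sum_n_sumR, <- Rmult_minus_distr_l, Rabs_mult,
      Rabs_Ropp, Rabs_right by (apply Rle_ge, pos_INR).
    eapply Rle_lt_trans; [apply Rmult_le_compat_l; [lra|apply Ht]|].
    specialize (HN n Hn). unfold Rdiv in *. lra.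
  - intros y Hy. apply boule_half in Hy. apply is_lim_seq_Reals, Series_correct.
    now apply ZT_series.
  - apply is_derive_Reals.
    apply (is_derive_ext (fun y => sumR (S n) (fun l => ZT p y l)));
      [intros t; now rewrite sum_n_sumR|].
    rewrite sum_n_sumR.
    apply (is_derive_sumR (fun l y => ZT p y l) (fun l y => - INR p * ZT (S p) y l)).
    intros k _. now apply ZT_deriv.
Qed.

Lemma is_derive_ZF_comb (a : nat -> R) (q : nat -> nat) n y :
  (forall k, (k < n)%nat -> (2 <= q k)%nat) -> 0 < y < 1 ->
  is_derive (fun z => sumR n (fun k => a k * ZF (q k) z)) y
    (sumR n (fun k => (a k * - INR (q k)) * ZF (S (q k)) y)).
Proof.
  intros Hq Hy.
  apply (is_derive_sumR (fun k z => a k * ZF (q k) z)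
    (fun k z => (a k * - INR (q k)) * ZF (S (q k)) z)).
  intros k Hk. rewrite Rmult_assoc. apply is_derive_scal, ZF_deriv; auto.
Qed.

(** * Euler's partial fraction expansion of [π² / sin² (π x)] *)

Definition csc2pi (y : R) : R := PI ^ 2 / sin (PI * y) ^ 2.

Lemma sin_ge_cubic y : 0 <= y -> y <= PI -> y - y ^ 3 / 6 <= sin y.
Proof.
  intros H0 HPI. destruct (SIN y H0 HPI) as [Hlb _].
  unfold sin_lb, sin_approx, sin_term in Hlb. simpl in Hlb.
  assert (y <= 4) by (pose proof PI_4; lra).
  assert (0 <= y ^ 5 / 120 - y ^ 7 / 5040).
  { replace (y ^ 5 / 120 - y ^ 7 / 5040) with (y ^ 5 * (42 - y ^ 2) / 5040) by (simpl; field).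
    apply Rdiv_le_0_compat; [|lra]. apply Rmult_le_pos; [apply pow_le; lra|simpl; nra]. }
  replace (INR (fact 3)) with 6 in Hlb by (simpl; ring).
  replace (INR (fact 5)) with 120 in Hlb by (simpl; ring).
  replace (INR (fact 7)) with 5040 in Hlb by (simpl; ring).
  simpl in *. lra.
Qed.

Lemma sinPI_pos x : 0 < x < 1 -> 0 < sin (PI * x).
Proof. intros Hx. pose proof PI_RGT_0. apply sin_gt_0; nra. Qed.

(* From [y - y³/6 <= sin y <= y] at [y = π x]. *)
Lemma csc2pi_sub_inv_sq x : 0 < x <= 1/2 -> 0 <= csc2pi x - / x ^ 2 <= 48.
Proof.
  intros Hx. pose proof PI_RGT_0. pose proof PI_4. unfold csc2pi.
  set (y := PI * x).
  assert (Hy : 0 < y <= 2) by (unfold y; split; nra).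
  assert (Hs1 : y - y ^ 3 / 6 <= sin y) by (apply sin_ge_cubic; unfold y; nra).
  assert (Hs2 : sin y < y) by (apply sin_lt_x; lra).
  set (s := sin y) in *.
  assert (Hs3 : y / 3 <= s) by (simpl in Hs1; nra).
  assert (E : PI ^ 2 / s ^ 2 - / x ^ 2 = PI ^ 2 * ((y - s) * (y + s) / (s ^ 2 * y ^ 2)))
    by (unfold y; field; split; lra).
  rewrite E.
  assert (Hf : 0 <= (y - s) * (y + s) / (s ^ 2 * y ^ 2) <= 3).
  { assert (Hd : 0 < s ^ 2 * y ^ 2) by (simpl; apply Rmult_lt_0_compat; nra).
    split; [apply Rdiv_le_0_compat; nra|].
    apply (Rmult_le_reg_r (s ^ 2 * y ^ 2)); [exact Hd|].
    replace ((y - s) * (y + s) / (s ^ 2 * y ^ 2) * (s ^ 2 * y ^ 2))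
      with ((y - s) * (y + s)) by (field; lra).
    assert ((y - s) * (y + s) <= (y ^ 3 / 6) * (2 * y)) by (apply Rmult_le_compat; lra).
    assert (y ^ 2 / 9 <= s ^ 2) by (simpl; nra).
    assert (3 * (y ^ 2 / 9) * y ^ 2 <= 3 * s ^ 2 * y ^ 2) by (simpl in *; nra).
    simpl in *. nra. }
  assert (PI ^ 2 <= 16) by (simpl; nra).
  split; [apply Rmult_le_pos; [simpl; nra|lra]|nra].
Qed.

Lemma ZT2_duplication x l : 0 < x < 1 ->
  ZT 2 (x / 2) l + ZT 2 ((x + 1) / 2) l
  = 4 * sumR 2 (fun k => ZT 2 x (l * 2 + k)%nat).
Proof.
  intros Hx. pose proof (pos_INR l). unfold ZT. simpl sumR.
  rewrite !plus_INR, mult_INR. simpl INR. simpl pow.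
  field. repeat split; lra.
Qed.

Lemma ZF2_duplication x : 0 < x < 1 -> ZF 2 (x / 2) + ZF 2 ((x + 1) / 2) = 4 * ZF 2 x.
Proof.
  intros Hx. unfold ZF.
  destruct (ZT_series 2 (x / 2) ltac:(lia) ltac:(lra)) as [E1 _].
  destruct (ZT_series 2 ((x + 1) / 2) ltac:(lia) ltac:(lra)) as [E2 _].
  destruct (ZT_series 2 x ltac:(lia) Hx) as [E3 _].
  rewrite <- Series_plus, (Series_ext _ _ (fun l => ZT2_duplication x l Hx)), Series_scal_l
    by assumption.
  f_equal. apply is_series_unique, is_series_blocks; [lia|now apply Series_correct].
Qed.

Lemma csc2pi_duplication x : 0 < x < 1 ->
  csc2pi (x / 2) + csc2pi ((x + 1) / 2) = 4 * csc2pi x.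
Proof.
  intros Hx. pose proof (sinPI_pos x Hx) as Hs. unfold csc2pi.
  replace (PI * ((x + 1) / 2)) with (PI * (x / 2) + PI / 2) by field.
  rewrite sin_plus, sin_PI2, cos_PI2.
  replace (PI * x) with (2 * (PI * (x / 2))) in * by field.
  rewrite sin_2a in *.
  pose proof (sin2_cos2 (PI * (x / 2))) as Hsc. unfold Rsqr in Hsc.
  set (s := sin (PI * (x / 2))) in *. set (c := cos (PI * (x / 2))) in *.
  assert (s <> 0) by (intros Hs0; rewrite Hs0 in Hs; lra).
  assert (c <> 0) by (intros Hc0; rewrite Hc0 in Hs; lra).
  replace (PI ^ 2 / s ^ 2 + PI ^ 2 / (s * 0 + c * 1) ^ 2)
    with (PI ^ 2 * (s ^ 2 + c ^ 2) / (s ^ 2 * c ^ 2)) by (field; auto).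
  replace (s ^ 2 + c ^ 2) with 1 by (simpl; lra). field. auto.
Qed.

Lemma ZF2_reflect x : ZF 2 (1 - x) = ZF 2 x.
Proof.
  unfold ZF. apply Series_ext. intros l. unfold ZT. simpl pow.
  replace (INR l + (1 - x)) with (INR l + 1 - x) by ring.
  replace (INR l + 1 - (1 - x)) with (INR l + x) by ring. ring.
Qed.

Lemma csc2pi_reflect x : csc2pi (1 - x) = csc2pi x.
Proof.
  unfold csc2pi. replace (PI * (1 - x)) with (PI - PI * x) by ring. now rewrite sin_PI_x.
Qed.

Definition euler_defect (x : R) : R := ZF 2 x - csc2pi x.

Lemma euler_defect_bound_half x : 0 < x <= 1/2 -> Rabs (euler_defect x) <= 56.
Proof.
  intros Hx.
  destruct (ZT_series 2 x ltac:(lia) ltac:(lra)) as [_ Ht].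
  specialize (Ht 0%nat). rewrite sum_O in Ht.
  assert (HT0 : ZT 2 x 0 = / x ^ 2 + / (1 - x) ^ 2)
    by (unfold ZT; simpl INR; simpl pow; rewrite !Rplus_0_l; ring).
  assert (0 < / (1 - x) ^ 2 <= 4).
  { split; [apply Rinv_0_lt_compat; simpl; nra|].
    replace 4 with (/ (1/2) ^ 2) by (simpl; field).
    apply Rinv_le_contravar; simpl; nra. }
  pose proof (csc2pi_sub_inv_sq x Hx).
  rewrite HT0 in Ht. change (INR 1) with 1 in Ht. rewrite Rdiv_1_r in Ht.
  unfold euler_defect. apply Rabs_le. apply Rabs_le_between in Ht. lra.
Qed.

Lemma euler_defect_bound x : 0 < x < 1 -> Rabs (euler_defect x) <= 56.
Proof.
  intros Hx. destruct (Rle_lt_dec x (1/2)); [apply euler_defect_bound_half; lra|].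
  replace (euler_defect x) with (euler_defect (1 - x))
    by (unfold euler_defect; now rewrite ZF2_reflect, csc2pi_reflect).
  apply euler_defect_bound_half; lra.
Qed.

Lemma euler_defect_iter k : forall x, 0 < x < 1 -> Rabs (euler_defect x) <= 56 / 2 ^ k.
Proof.
  induction k as [|k IHk]; intros x Hx.
  - simpl. rewrite Rdiv_1_r. now apply euler_defect_bound.
  - replace (euler_defect x) with ((euler_defect (x / 2) + euler_defect ((x + 1) / 2)) / 4)
      by (unfold euler_defect; pose proof (ZF2_duplication x Hx);
          pose proof (csc2pi_duplication x Hx); lra).
    pose proof (IHk (x / 2) ltac:(lra)). pose proof (IHk ((x + 1) / 2) ltac:(lra)).
    assert (0 < 2 ^ k) by (apply pow_lt; lra).
    unfold Rdiv. rewrite Rabs_mult, (Rabs_right (/ 4)) by lra.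
    eapply Rle_trans; [apply Rmult_le_compat_r; [lra|apply Rabs_triang]|].
    simpl pow. rewrite Rinv_mult. unfold Rdiv in *. nra.
Qed.

Lemma INR_S_le_pow2 k : INR (S k) <= 2 ^ k.
Proof.
  induction k as [|k IHk]; [simpl; lra|]. rewrite S_INR. change (2 ^ S k) with (2 * 2 ^ k).
  assert (1 <= 2 ^ k) by (apply pow_R1_Rle; lra). lra.
Qed.

Lemma ZF2_eq_csc2pi x : 0 < x < 1 -> ZF 2 x = csc2pi x.
Proof.
  intros Hx. enough (Hzero : Rabs (euler_defect x) = 0)
    by (apply Rabs_eq_0 in Hzero; unfold euler_defect in Hzero; lra).
  apply Rle_antisym; [|apply Rabs_pos].
  apply Rnot_lt_le. intros Hpos.
  destruct (eventually_div_INR_lt 56 _ Hpos) as [N HN].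
  specialize (HN N (Nat.le_refl N)).
  pose proof (euler_defect_iter N x Hx).
  assert (56 / 2 ^ N <= 56 / INR (S N)).
  { apply Rmult_le_compat_l; [lra|]. apply Rinv_le_contravar, INR_S_le_pow2.
    apply lt_0_INR; lia. }
  lra.
Qed.

(** * The coefficients [4^n Γ(2v - 2n) / Γ(2v) s(v, n)] *)

Lemma esym_0 l : esym l 0 = 1.
Proof. now destruct l. Qed.

Lemma esym_snoc l x n : esym (l ++ [x]) (S n) = esym l (S n) + x * esym l n.
Proof.
  revert n. induction l as [|y l IHl]; intros n; simpl.
  - destruct n; simpl; ring.
  - destruct n; rewrite !IHl; [rewrite !esym_0|]; ring.
Qed.

Lemma esym_gt_length l n : (length l < n)%nat -> esym l n = 0.
Proof.
  revert n. induction l as [|y l IHl]; intros [|n] Hn; simpl in *; try lia; [reflexivity|].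
  rewrite !IHl by lia. ring.
Qed.

Lemma s_0 v : s v 0 = 1.
Proof. apply esym_0. Qed.

Lemma s_ge v n : (v <= n)%nat -> (1 <= n)%nat -> s v n = 0.
Proof. intros. apply esym_gt_length. rewrite length_map, length_seq. lia. Qed.

Lemma s_S v n : (1 <= v)%nat -> s (S v) (S n) = s v (S n) + INR v ^ 2 * s v n.
Proof.
  intros Hv. unfold s. replace (S v - 1)%nat with (S (v - 1)) by lia.
  rewrite seq_S, map_app. simpl map at 2. rewrite esym_snoc.
  replace (v - 1 + 1)%nat with v by lia. ring.
Qed.

Lemma GammaNat_pos k : 0 < GammaNat k.
Proof. apply lt_0_INR, lt_O_fact. Qed.

Lemma GammaNat_S k : (1 <= k)%nat -> GammaNat (S k) = INR k * GammaNat k.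
Proof.
  intros Hk. unfold GammaNat. destruct k as [|k]; [lia|].
  replace (S (S k) - 1)%nat with (S k) by lia. replace (S k - 1)%nat with k by lia.
  change (fact (S k)) with (S k * fact k)%nat. now rewrite mult_INR.
Qed.

Lemma GammaNat_SS k : (1 <= k)%nat ->
  GammaNat (k + 2) = INR k * INR (k + 1) * GammaNat k.
Proof.
  intros Hk. replace (k + 2)%nat with (S (S k)) by lia.
  rewrite !GammaNat_S by lia. rewrite S_INR, plus_INR. simpl INR. ring.
Qed.

Definition dcoef (v n : nat) : R := 4 ^ n * (GammaNat (2 * v - 2 * n) / GammaNat (2 * v)) * s v n.

Lemma dcoef_0 v : dcoef v 0 = 1.
Proof.
  unfold dcoef. rewrite s_0, Nat.sub_0_r. pose proof (GammaNat_pos (2 * v)). rewrite pow_O. field. lra.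
Qed.

Lemma dcoef_S v n : (1 <= v)%nat -> (n < v)%nat ->
  dcoef (S v) (S n) * (INR (2 * v) * INR (2 * v + 1)) =
  dcoef v (S n) * INR (2 * v - 2 * S n) * INR (2 * v - 2 * S n + 1) + 4 * INR v ^ 2 * dcoef v n.
Proof.
  intros Hv Hn. unfold dcoef.
  rewrite s_S by exact Hv.
  replace (2 * S v)%nat with (2 * v + 2)%nat by lia.
  replace (2 * v + 2 - 2 * S n)%nat with (2 * v - 2 * n)%nat by lia.
  rewrite GammaNat_SS by lia.
  pose proof (GammaNat_pos (2 * v)). pose proof (GammaNat_pos (2 * v - 2 * n)).
  assert (INR (2 * v) <> 0) by (apply not_0_INR; lia).
  assert (INR (2 * v + 1) <> 0) by (apply not_0_INR; lia).
  destruct (Nat.eq_dec v (S n)) as [->|Hvn].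
  - rewrite (s_ge (S n) (S n)) by lia.
    change (4 ^ S n) with (4 * 4 ^ n). field. lra.
  - replace (2 * v - 2 * n)%nat with (2 * v - 2 * S n + 2)%nat by lia.
    rewrite (GammaNat_SS (2 * v - 2 * S n)) by lia.
    change (4 ^ S n) with (4 * 4 ^ n). field. lra.
Qed.

(* With [φ p = ZF p y] this is the coefficient identity behind the second
   derivative of [csc2pi ^ v]. *)
Lemma dcoef_recurrence_sum v (z : R) (φ : nat -> R) : (1 <= v)%nat ->
  INR (2 * v) * INR (2 * v + 1) *
    sumR (S v) (fun n => dcoef (S v) n * z ^ (2 * n) * φ (2 * S v - 2 * n)%nat)
  = sumR v (fun n => dcoef v n * z ^ (2 * n) * (INR (2 * v - 2 * n) * INR (2 * v - 2 * n + 1))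
                      * φ (S (S (2 * v - 2 * n))))
    + 4 * INR v ^ 2 * z ^ 2 * sumR v (fun n => dcoef v n * z ^ (2 * n) * φ (2 * v - 2 * n)%nat).
Proof.
  intros Hv.
  set (g := fun n => dcoef v n * z ^ (2 * n) * (INR (2 * v - 2 * n) * INR (2 * v - 2 * n + 1))
                      * φ (S (S (2 * v - 2 * n)))).
  set (c := INR (2 * v) * INR (2 * v + 1)).
  assert (Hshift : c * sumR v (fun n => dcoef (S v) (S n) * z ^ (2 * S n) * φ (2 * S v - 2 * S n)%nat)
    = sumR v (fun n => g (S n))
      + 4 * INR v ^ 2 * z ^ 2 * sumR v (fun n => dcoef v n * z ^ (2 * n) * φ (2 * v - 2 * n)%nat)).
  { rewrite <- !sumR_scal_l, <- sumR_plus. apply sumR_ext. intros n Hn. unfold g.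
    replace (2 * S v - 2 * S n)%nat with (2 * v - 2 * n)%nat by lia.
    replace (S (S (2 * v - 2 * S n))) with (2 * v - 2 * n)%nat by lia.
    replace (z ^ (2 * S n)) with (z ^ 2 * z ^ (2 * n)) by (rewrite <- pow_add; f_equal; lia).
    pose proof (dcoef_S v n Hv Hn) as Hrec. fold c in Hrec.
    transitivity ((dcoef (S v) (S n) * c) * (z ^ 2 * z ^ (2 * n)) * φ (2 * v - 2 * n)%nat);
      [ring|rewrite Hrec; ring]. }
  assert (Hg0 : g 0%nat = c * (dcoef (S v) 0 * z ^ (2 * 0) * φ (2 * S v - 2 * 0)%nat)).
  { unfold g, c. rewrite !dcoef_0, !Nat.sub_0_r.
    replace (S (S (2 * v))) with (2 * S v)%nat by lia. simpl pow. ring. }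
  assert (Hgv : g v = 0) by (unfold g; rewrite Nat.sub_diag; simpl INR; ring).
  pose proof (sumR_Sl v g) as Hsplit. rewrite sumR_S in Hsplit.
  rewrite sumR_Sl, Rmult_plus_distr_l, Hshift. fold g. lra.
Qed.

(** * Powers of the cosecant as combinations of lattice sums *)

Definition cotpi (y : R) : R := PI * cos (PI * y) / sin (PI * y).

Lemma csc2pi_deriv y : 0 < y < 1 -> is_derive csc2pi y (-2 * csc2pi y * cotpi y).
Proof.
  intros Hy. pose proof (sinPI_pos y Hy). unfold csc2pi, cotpi. auto_derive.
  - nra.
  - simpl. field. lra.
Qed.

Lemma cotpi_deriv y : 0 < y < 1 -> is_derive cotpi y (- csc2pi y).
Proof.
  intros Hy. pose proof (sinPI_pos y Hy). pose proof (sin2_cos2 (PI * y)) as Hpyth.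
  unfold csc2pi, cotpi, Rsqr in *. auto_derive; [lra|].
  transitivity (- (PI ^ 2 * (sin (PI * y) * sin (PI * y) + cos (PI * y) * cos (PI * y))
                   / sin (PI * y) ^ 2)); [field; lra|].
  rewrite Hpyth. field. lra.
Qed.

Lemma cotpi_sq y : 0 < y < 1 -> cotpi y ^ 2 = csc2pi y - PI ^ 2.
Proof.
  intros Hy. pose proof (sinPI_pos y Hy). pose proof (sin2_cos2 (PI * y)) as Hpyth.
  unfold csc2pi, cotpi, Rsqr in *.
  transitivity (PI ^ 2 * (1 - sin (PI * y) * sin (PI * y)) / sin (PI * y) ^ 2);
    [rewrite <- Hpyth|]; field; lra.
Qed.

Lemma csc2pi_pow_deriv v y : 0 < y < 1 ->
  is_derive (fun z => csc2pi z ^ v) y (-2 * INR v * csc2pi y ^ v * cotpi y).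
Proof.
  intros Hy. pose proof (is_derive_pow csc2pi v y _ (csc2pi_deriv y Hy)) as Hd.
  destruct v as [|w]; simpl pred in Hd.
  - replace (-2 * INR 0 * csc2pi y ^ 0 * cotpi y)
      with (INR 0 * (-2 * csc2pi y * cotpi y) * csc2pi y ^ 0) by (simpl; ring).
    exact Hd.
  - replace (-2 * INR (S w) * csc2pi y ^ S w * cotpi y)
      with (INR (S w) * (-2 * csc2pi y * cotpi y) * csc2pi y ^ w) by (simpl; ring).
    exact Hd.
Qed.

Lemma csc2pi_pow_cotpi_deriv v y : 0 < y < 1 ->
  is_derive (fun z => csc2pi z ^ v * cotpi z) y
    (2 * INR v * PI ^ 2 * csc2pi y ^ v - (2 * INR v + 1) * csc2pi y ^ S v).
Proof.
  intros Hy.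
  pose proof (is_derive_mult (fun z => csc2pi z ^ v) cotpi y _ _
    (csc2pi_pow_deriv v y Hy) (cotpi_deriv y Hy) Rmult_comm) as Hd.
  replace (2 * INR v * PI ^ 2 * csc2pi y ^ v - (2 * INR v + 1) * csc2pi y ^ S v)
    with (-2 * INR v * csc2pi y ^ v * cotpi y * cotpi y + csc2pi y ^ v * - csc2pi y)
    by (pose proof (cotpi_sq y Hy); simpl in *; nra).
  exact Hd.
Qed.

Lemma locally_01 y : 0 < y < 1 -> locally y (fun t => 0 < t < 1).
Proof.
  intros Hy. assert (He : 0 < Rmin y (1 - y)) by (apply Rmin_pos; lra).
  exists (mkposreal _ He). intros t Ht. simpl in Ht.
  unfold ball in Ht; simpl in Ht. unfold AbsRing_ball, abs, minus, plus, opp in Ht; simpl in Ht.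
  apply Rabs_def2 in Ht. pose proof (Rmin_l y (1 - y)). pose proof (Rmin_r y (1 - y)). lra.
Qed.

Lemma is_derive_unique_01 (f g : R -> R) y a c : 0 < y < 1 ->
  (forall t, 0 < t < 1 -> f t = g t) -> is_derive f y a -> is_derive g y c -> a = c.
Proof.
  intros Hy Hfg Hf Hg.
  apply (is_derive_ext_loc f g) in Hf;
    [|exact (filter_imp _ _ Hfg (locally_01 y Hy))].
  rewrite <- (is_derive_unique g y a Hf). now apply is_derive_unique.
Qed.

Lemma is_derive2_unique_01 (f g f1 g1 : R -> R) y a c : 0 < y < 1 ->
  (forall t, 0 < t < 1 -> f t = g t) ->
  (forall t, 0 < t < 1 -> is_derive f t (f1 t)) ->
  (forall t, 0 < t < 1 -> is_derive g t (g1 t)) ->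
  is_derive f1 y a -> is_derive g1 y c -> a = c.
Proof.
  intros Hy Hfg Hf Hg. apply is_derive_unique_01; [exact Hy|].
  intros t Ht. exact (is_derive_unique_01 f g t _ _ Ht Hfg (Hf t Ht) (Hg t Ht)).
Qed.

Definition csc_expansion (v : nat) (y : R) : R :=
  sumR v (fun n => dcoef v n * PI ^ (2 * n) * ZF (2 * v - 2 * n) y).

Lemma csc2pi_pow_expansion_S v : (1 <= v)%nat ->
  (forall y, 0 < y < 1 -> csc2pi y ^ v = csc_expansion v y) ->
  forall y, 0 < y < 1 -> csc2pi y ^ S v = csc_expansion (S v) y.
Proof.
  intros Hv IH y Hy.
  set (a := fun n => dcoef v n * PI ^ (2 * n)).
  set (q := fun n => (2 * v - 2 * n)%nat).
  assert (Hq : forall n, (n < v)%nat -> (2 <= q n)%nat) by (intros n Hn; unfold q; lia).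
  assert (Hderiv2 :
    -2 * INR v * (2 * INR v * PI ^ 2 * csc2pi y ^ v - (2 * INR v + 1) * csc2pi y ^ S v)
    = sumR v (fun n => (a n * - INR (q n) * - INR (S (q n))) * ZF (S (S (q n))) y)).
  { apply (is_derive2_unique_01 (fun t => csc2pi t ^ v) (csc_expansion v)
      (fun t => -2 * INR v * (csc2pi t ^ v * cotpi t))
      (fun t => sumR v (fun n => (a n * - INR (q n)) * ZF (S (q n)) t)) y); [exact Hy|exact IH| | | |].
    - intros t Ht. rewrite <- Rmult_assoc. apply csc2pi_pow_deriv, Ht.
    - intros t Ht. apply (is_derive_ZF_comb a q v t Hq Ht).
    - apply is_derive_scal, csc2pi_pow_cotpi_deriv, Hy.
    - apply (is_derive_ZF_comb (fun n => a n * - INR (q n)) (fun n => S (q n)) v y);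
        [intros n Hn; specialize (Hq n Hn); lia|exact Hy]. }
  assert (Hc : 0 < INR (2 * v) * INR (2 * v + 1))
    by (apply Rmult_lt_0_compat; apply lt_0_INR; lia).
  apply (Rmult_eq_reg_l (INR (2 * v) * INR (2 * v + 1))); [|lra].
  unfold csc_expansion. rewrite (dcoef_recurrence_sum v PI (fun p => ZF p y) Hv).
  fold (csc_expansion v y). rewrite <- IH by exact Hy.
  rewrite (sumR_ext v _ (fun n => (a n * - INR (q n) * - INR (S (q n))) * ZF (S (S (q n))) y))
    by (intros n _; unfold a, q; rewrite Nat.add_1_r; ring).
  rewrite <- Hderiv2, plus_INR, mult_INR. simpl INR. simpl pow. ring.
Qed.

Lemma csc2pi_pow_expansion v : (1 <= v)%nat ->
  forall y, 0 < y < 1 -> csc2pi y ^ v = csc_expansion v y.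
Proof.
  induction v as [|v IHv]; intros Hv; [lia|].
  destruct v as [|w].
  - intros y Hy. unfold csc_expansion. simpl sumR. rewrite dcoef_0, <- ZF2_eq_csc2pi by exact Hy.
    simpl. ring.
  - apply csc2pi_pow_expansion_S; [lia|apply IHv; lia].
Qed.

(** * Lattice sums at the points [k / m] and the Dowker sum *)

Lemma is_series_zeta p : (2 <= p)%nat -> is_series (fun k => / INR (k + 1) ^ p) (zeta p).
Proof.
  intros Hp.
  assert (Hex : ex_series (fun k => / INR (k + 1) ^ p)).
  { apply (ex_series_telescope_bound _ 2). intros l Hl.
    destruct (inv_pow_le_telescope (INR (l + 1)) l p Hl Hp) as [A B];
      [apply le_INR; lia|].
    rewrite Rabs_right by lra. lra. }
  destruct Hex as [l Hl]. replace (zeta p) with l; [exact Hl|].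
  assert (HUn : Un_cv (fun N => sum_f_R0 (fun k => / INR (k + 1) ^ p) N) l).
  { apply is_lim_seq_Reals, (is_lim_seq_ext (sum_n (fun k => / INR (k + 1) ^ p)));
      [intros N; apply sum_n_Reals|exact Hl]. }
  apply (UL_sequence _ _ _ HUn). exact (epsilon_spec (inhabits 0) _ (ex_intro _ l HUn)).
Qed.

Lemma zeta_pos p : (2 <= p)%nat -> 0 < zeta p.
Proof.
  intros Hp. pose proof (is_series_zeta p Hp) as Hz.
  rewrite <- (is_series_unique _ _ Hz), Series_incr_1 by (eexists; exact Hz).
  assert (0 <= Series (fun k => / INR (S k + 1) ^ p)).
  { apply Rle_trans with (Series (fun _ => 0 * 0)); [rewrite Series_scal_l; lra|].
    apply Series_le; [|apply (ex_series_incr_1 (fun k => / INR (k + 1) ^ p)); eexists; exact Hz].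
    intros n. rewrite Rmult_0_l.
    split; [lra|apply Rlt_le, Rinv_0_lt_compat, pow_lt, lt_0_INR; lia]. }
  change (INR (0 + 1)) with 1. rewrite pow1, Rinv_1. lra.
Qed.

Lemma ratio_in_01 j m : (j < m - 1)%nat -> 0 < INR (j + 1) / INR m < 1.
Proof.
  intros Hj. assert (Hm : 0 < INR m) by (apply lt_0_INR; lia).
  split; [apply Rdiv_lt_0_compat; [apply lt_0_INR; lia|exact Hm]|].
  apply Rmult_lt_reg_r with (INR m); [exact Hm|].
  unfold Rdiv. rewrite Rmult_assoc, Rinv_l, Rmult_1_r, Rmult_1_l by lra.
  apply lt_INR. lia.
Qed.

Lemma inv_div_pow A M p : M <> 0 -> A <> 0 -> / (A / M) ^ p = M ^ p * / A ^ p.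
Proof.
  intros. unfold Rdiv. rewrite Rpow_mult_distr, pow_inv. field.
  split; apply pow_nonzero; auto.
Qed.

(* At [x = (k + 1) / m] the two halves of [ZT] are terms of [ζ], namely those of
   index [l m + k + 1] and [l m + (m - 1 - k)]. *)
Lemma ZT_at_ratio j m k l : (k < m)%nat ->
  ZT (2 * j) (INR (k + 1) / INR (S m)) l =
  INR (S m) ^ (2 * j) * (/ INR (l * S m + k + 1) ^ (2 * j)
                         + / INR (l * S m + (m - 1 - k) + 1) ^ (2 * j)).
Proof.
  intros Hk. unfold ZT. rewrite pow_1_even, Rmult_1_l.
  assert (HM : INR (S m) <> 0) by (apply not_0_INR; lia).
  replace (INR l + INR (k + 1) / INR (S m)) with (INR (l * S m + k + 1) / INR (S m))
    by (rewrite !plus_INR, mult_INR; field; exact HM).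
  replace (INR l + 1 - INR (k + 1) / INR (S m))
    with (INR (l * S m + (m - 1 - k) + 1) / INR (S m)).
  2: { replace (l * S m + (m - 1 - k) + 1)%nat with (l * S m + (m - k))%nat by lia.
       rewrite plus_INR, mult_INR, minus_INR, plus_INR, !S_INR by lia. simpl INR.
       field. rewrite <- S_INR. exact HM. }
  rewrite !inv_div_pow by (exact HM || (apply not_0_INR; lia)). ring.
Qed.

Lemma ZF_sum_ratio j m : (1 <= j)%nat -> (1 <= m)%nat ->
  sumR (m - 1) (fun k => ZF (2 * j) (INR (k + 1) / INR m))
  = 2 * (INR m ^ (2 * j) - 1) * zeta (2 * j).
Proof.
  intros Hj Hm. destruct m as [|m]; [lia|]. replace (S m - 1)%nat with m by lia.
  set (p := (2 * j)%nat). assert (Hp : (2 <= p)%nat) by (unfold p; lia).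
  set (M := INR (S m)).
  assert (HMp : 0 < M ^ p) by (apply pow_lt, lt_0_INR; lia).
  set (a := fun N => / INR (N + 1) ^ p).
  pose proof (is_series_zeta p Hp) as Hz. fold a in Hz.
  assert (Hsum : is_series (fun l => sumR m (fun k => ZT p (INR (k + 1) / M) l))
    (sumR m (fun k => ZF p (INR (k + 1) / M)))).
  { apply is_series_sumR. intros k Hk. apply Series_correct, ZT_series; [exact Hp|].
    apply ratio_in_01. lia. }
  apply is_series_unique in Hsum. rewrite <- Hsum.
  apply is_series_unique.
  apply (is_series_ext (fun l => (2 * M ^ p) * sumR (S m) (fun k => a (l * S m + k)%nat)
                                 + (-2) * a l)).
  - intros l.
    rewrite (sumR_ext m _ (fun k => M ^ p * (a (l * S m + k)%nat + a (l * S m + (m - 1 - k))%nat)))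
      by (intros k Hk; apply ZT_at_ratio, Hk).
    rewrite sumR_scal_l, sumR_plus.
    rewrite (sumR_rev m (fun k => a (l * S m + k)%nat)), sumR_S.
    assert (Hlast : a (l * S m + m)%nat = / M ^ p * a l).
    { unfold a. replace (INR (l * S m + m + 1)) with (INR (l + 1) * M)
        by (unfold M; rewrite !plus_INR, mult_INR, !S_INR; simpl; ring).
      rewrite Rpow_mult_distr, Rinv_mult. ring. }
    rewrite Hlast. field_simplify; [reflexivity|lra].
  - replace (2 * (M ^ p - 1) * zeta p) with (2 * M ^ p * zeta p + (-2) * zeta p) by ring.
    apply (is_series_plus (V := R_NormedModule));
      apply (is_series_scal_l (V := R_NormedModule)); [apply is_series_blocks; [lia|]|]; exact Hz.
Qed.

Lemma csc_pow_ratio m j v : (j < m - 1)%nat ->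
  csc (INR (j + 1) * PI / INR m) ^ (2 * v) = / PI ^ (2 * v) * csc2pi (INR (j + 1) / INR m) ^ v.
Proof.
  intros Hj. pose proof (sinPI_pos _ (ratio_in_01 j m Hj)). pose proof PI_RGT_0.
  unfold csc, csc2pi.
  replace (PI * (INR (j + 1) / INR m)) with (INR (j + 1) * PI / INR m) in *
    by (field; apply not_0_INR; lia).
  rewrite !pow_mult, <- pow_inv, <- Rpow_mult_distr. f_equal. simpl. field. lra.
Qed.

Definition dowker_coef (v n : nat) : R :=
  2 * dcoef v n * zeta (2 * (v - n)) / PI ^ (2 * (v - n)).

Lemma Dowker_eq_poly v m : (1 <= v)%nat -> (1 <= m)%nat ->
  Dowker m v = sumR v (fun n => dowker_coef v n * (INR m ^ (2 * (v - n)) - 1)).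
Proof.
  intros Hv Hm. unfold Dowker. pose proof PI_RGT_0.
  rewrite (sumR_ext _ _ (fun j => / PI ^ (2 * v) * csc_expansion v (INR (j + 1) / INR m)))
    by (intros j Hj; rewrite csc_pow_ratio, csc2pi_pow_expansion; auto using ratio_in_01).
  rewrite sumR_scal_l. unfold csc_expansion. rewrite sumR_swap, <- sumR_scal_l.
  apply sumR_ext. intros n Hn.
  replace (2 * v - 2 * n)%nat with (2 * (v - n))%nat by lia.
  rewrite sumR_scal_l, ZF_sum_ratio by lia. unfold dowker_coef.
  replace (PI ^ (2 * v)) with (PI ^ (2 * n) * PI ^ (2 * (v - n)))
    by (rewrite <- pow_add; f_equal; lia).
  field. split; apply pow_nonzero; lra.
Qed.

Lemma dowker_coef_gamma v n M : (n < v)%nat -> 0 < M ->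
  dowker_coef v n * (M ^ (2 * (v - n)) - 1) =
  2 ^ (2 * v + 1) * ((M / (2 * PI)) ^ (2 * v - 2 * n)
    * (GammaNat (2 * v - 2 * n) / GammaNat (2 * v)) * s v n
    * (1 - / M ^ (2 * v - 2 * n)) * zeta (2 * v - 2 * n)).
Proof.
  intros Hn HM. pose proof PI_RGT_0. unfold dowker_coef, dcoef.
  set (k := (v - n)%nat).
  replace (2 * v - 2 * n)%nat with (2 * k)%nat by (unfold k; lia).
  replace (2 * v + 1)%nat with (S (2 * n + 2 * k)) by (unfold k; lia).
  rewrite <- tech_pow_Rmult, pow_add.
  replace (4 ^ n) with (2 ^ (2 * n)) by (rewrite pow_mult; f_equal; ring).
  unfold Rdiv. rewrite Rpow_mult_distr, pow_inv, Rpow_mult_distr.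
  pose proof (GammaNat_pos (2 * v)).
  assert (PI ^ (2 * k) <> 0) by (apply pow_nonzero; lra).
  assert (2 ^ (2 * k) <> 0) by (apply pow_nonzero; lra).
  assert (M ^ (2 * k) <> 0) by (apply pow_nonzero; lra).
  field. repeat split; auto; lra.
Qed.

Lemma Dowker_zeta_formula v m : (1 <= v)%nat -> (1 <= m)%nat ->
  Dowker m v =
  2 ^ (2 * v + 1) *
  sumR v (fun n =>
    (INR m / (2 * PI)) ^ (2 * v - 2 * n)
    * (GammaNat (2 * v - 2 * n) / GammaNat (2 * v))
    * s v n
    * (1 - / (INR m) ^ (2 * v - 2 * n))
    * zeta (2 * v - 2 * n)).
Proof.
  intros Hv Hm. rewrite Dowker_eq_poly, <- sumR_scal_l by assumption.
  apply sumR_ext. intros n Hn. apply dowker_coef_gamma; [exact Hn|apply lt_0_INR; lia].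
Qed.

Lemma sumR_factor_sq (c : nat -> R) x v :
  sumR v (fun n => c n * (x ^ (2 * (v - n)) - 1))
  = (x ^ 2 - 1) * sumR v (fun j => sumR (v - j) c * x ^ (2 * j)).
Proof.
  rewrite <- (sumR_triangle v c (fun j => x ^ (2 * j))), <- sumR_scal_l.
  apply sumR_ext. intros n _.
  rewrite pow_mult, sumR_geom, (sumR_ext _ (pow (x ^ 2)) (fun j => x ^ (2 * j)))
    by (intros; symmetry; apply pow_mult).
  ring.
Qed.

Lemma dowker_coef_0_pos v : (1 <= v)%nat -> 0 < dowker_coef v 0.
Proof.
  intros Hv. pose proof PI_RGT_0. pose proof (zeta_pos (2 * v) ltac:(lia)).
  unfold dowker_coef. rewrite dcoef_0, Nat.sub_0_r.
  apply Rdiv_lt_0_compat; [lra|apply pow_lt; lra].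
Qed.

Theorem mainTheorem9 :
  forall v : nat, (1 <= v)%nat ->
    (forall m : nat, (1 <= m)%nat ->
      Dowker m v =
      2 ^ (2 * v + 1) *
      sumR v (fun n =>
        (INR m / (2 * PI)) ^ (2 * v - 2 * n)
        * (GammaNat (2 * v - 2 * n) / GammaNat (2 * v))
        * s v n
        * (1 - / (INR m) ^ (2 * v - 2 * n))
        * zeta (2 * v - 2 * n)))
    /\
    (exists q : nat -> R,
      q (v - 1)%nat <> 0 /\
      forall m : nat, (1 <= m)%nat ->
        Dowker m v =
        ((INR m) ^ 2 - 1) * sumR v (fun j => q j * (INR m) ^ (2 * j))).
Proof.
  intros v Hv. split; [intros m Hm; now apply Dowker_zeta_formula|].
  exists (fun j => sumR (v - j) (dowker_coef v)). split.
  - replace (v - (v - 1))%nat with 1%nat by lia. simpl sumR. rewrite Rplus_0_l.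
    apply Rgt_not_eq, dowker_coef_0_pos, Hv.
  - intros m Hm. rewrite Dowker_eq_poly by assumption. apply sumR_factor_sq.
Qed.
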